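(* Let $\sigma>0,\lambda>0,\rho>0$ satisfy $\rho^{-2}\sigma<1$ and $\rho\le\lambda-2\rho^{-1}\sigma(1-\rho^{-2}\sigma)^{-1}$. Let $\Omega=\begin{bmatrix}\Omega^{11}&\Omega^{12}\\\Omega^{21}&\Omega^{22}\end{bmatrix}\in\mathbb{R}^{2n\times2n}$ be symmetric (so $(\Omega^{12})^T=\Omega^{21}$) with $\Omega^{11}+\Omega^{22}>0$, and suppose $$\Omega^{12}\Omega^{21}\le\sigma I,\quad\Omega^{21}\Omega^{12}\le\sigma I,\quad\Omega^{11}+\Omega^{22}\ge\lambda I.$$ Define $\Omega_1=\Omega$ and $\Omega_{k+1}=\Omega_k\circledast\Omega_k$. Then $\Omega^{11}_k+\Omega^{22}_k\ge\rho I$ for all $k\in\mathbb{Z}_{>0}$, and there is a block diagonal matrix $\Omega_\infty=\operatorname{diag}(\Omega^{11}_\infty,\Omega^{22}_\infty)$ with $\Omega^{11}_\infty+\Omega^{22}_\infty\ge\rho I$ such that $\Omega_k\to\Omega_\infty$ as $k\to\infty$.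
   Context: For symmetric $\Omega_1,\Omega_2\in\mathbb{R}^{2n\times2n}$ partitioned into $n\times n$ blocks $\Omega_j^{ab}$, with $\Omega_1^{22}+\Omega_2^{11}>0$, define $$\Omega_1\circledast\Omega_2=\begin{bmatrix}\Omega_1^{11}&0\\0&\Omega_2^{22}\end{bmatrix}-\begin{bmatrix}\Omega_1^{12}\\\Omega_2^{21}\end{bmatrix}(\Omega_1^{22}+\Omega_2^{11})^{-1}\begin{bmatrix}\Omega_1^{21}&\Omega_2^{12}\end{bmatrix}.$$ Matrix inequalities are in the positive semidefinite order. *)

From HB Require Import structures.
From mathcomp Require Import all_boot all_order all_algebra.
From mathcomp Require Import all_classical all_reals all_analysis.
Set Implicit Arguments. Unset Strict Implicit. Unset Printing Implicit Defensive.
Import Order.TTheory GRing.Theory Num.Theory.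
Local Open Scope ring_scope.

Definition psd (R : realType) (m : nat) (A : 'M[R]_m) : Prop :=
  forall x : 'cV[R]_m, 0 <= (x^T *m A *m x) 0 0.

Definition pd (R : realType) (m : nat) (A : 'M[R]_m) : Prop :=
  forall x : 'cV[R]_m, x != 0 -> 0 < (x^T *m A *m x) 0 0.

Definition lemx (R : realType) (m : nat) (A B : 'M[R]_m) : Prop := psd (B - A).

(* The operation Omega1 circledast Omega2 on 2n x 2n matrices split into n x n blocks
   (Omega^{11} = ulsubmx, Omega^{12} = ursubmx, Omega^{21} = dlsubmx,
    Omega^{22} = drsubmx). *)
Definition oast (R : realType) (n : nat) (O1 O2 : 'M[R]_(n + n)) : 'M[R]_(n + n) :=
  block_mx (ulsubmx O1) 0 0 (drsubmx O2)
  - col_mx (ursubmx O1) (dlsubmx O2) *m invmx (drsubmx O1 + ulsubmx O2)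
      *m row_mx (dlsubmx O1) (ursubmx O2).

(* omseq O k = Omega_{k+1}, where Omega_1 = O and Omega_{k+1} = Omega_k circledast Omega_k. *)
Fixpoint omseq (R : realType) (n : nat) (O : 'M[R]_(n + n)) (k : nat) : 'M[R]_(n + n) :=
  match k with
  | 0 => O
  | k'.+1 => let P := omseq O k' in oast P P
  end.

From HB Require Import structures.
From mathcomp Require Import all_boot all_order all_algebra.
From mathcomp Require Import all_classical all_reals all_analysis.
From mathcomp Require Import ring lra.
Set Implicit Arguments.
Unset Strict Implicit.
Unset Printing Implicit Defensive.

Import Order.TTheory GRing.Theory Num.Theory.
Import numFieldNormedType.Exports.
Local Open Scope classical_set_scope.
Local Open Scope ring_scope.

(* Write S = Ω¹¹ + Ω²², B = Ω¹² and C = Ω²¹ = Bᵀ.  One step Ω ↦ Ω ⊛ Ω replaces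
   S by S - B S⁻¹ C - C S⁻¹ B and the off-diagonal blocks by -B S⁻¹ B and
   -C S⁻¹ C.  Hence if xᵀ S x ≥ l |x|² with l ≥ ρ and |B x|², |C x|² ≤ s |x|²,
   the new diagonal sum is bounded below by l - 2s/ρ and the new off-diagonal
   blocks satisfy the same bound with s²/ρ².  For q = ρ⁻² σ the pairs
   l_k = ρ (1 + 2 q^(k+1) / (1 - q)) and s_k = ρ² q^(k+1) are propagated, and
   l_0 ≤ λ is exactly the hypothesis on ρ.  Every entry of Ω_(k+1) - Ω_k is
   then O(q^((k+1)/2)), so Ω_k converges; its off-diagonal blocks tend to 0 and
   the lower bound ρ passes to the limit. *)

Definition dot (R : realType) (m : nat) (u v : 'cV[R]_m) : R := (u^T *m v) 0 0.
Arguments dot {R m}.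
Local Notation nrm2 u := (dot u u).

Section Dot.
Variables (R : realType) (m : nat).
Implicit Types (u v w x : 'cV[R]_m) (A B : 'M[R]_m).

Lemma dotE u v : dot u v = \sum_i u i 0 * v i 0.
Proof. by rewrite /dot mxE; apply: eq_bigr => i _; rewrite mxE. Qed.

Lemma dotC u v : dot u v = dot v u.
Proof. by rewrite !dotE; apply: eq_bigr => i _; rewrite mulrC. Qed.

Lemma dotDl u v w : dot (u + v) w = dot u w + dot v w.
Proof. by rewrite !dotE -big_split; apply: eq_bigr => i _; rewrite mxE mulrDl. Qed.

Lemma dotDr u v w : dot u (v + w) = dot u v + dot u w.
Proof. by rewrite dotC dotDl !(dotC u). Qed.

Lemma dotZl a u v : dot (a *: u) v = a * dot u v.
Proof. by rewrite !dotE mulr_sumr; apply: eq_bigr => i _; rewrite mxE mulrA. Qed.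

Lemma dotZr a u v : dot u (a *: v) = a * dot u v.
Proof. by rewrite dotC dotZl dotC. Qed.

Lemma dotNl u v : dot (- u) v = - dot u v.
Proof. by rewrite -scaleN1r dotZl mulN1r. Qed.

Lemma dotNr u v : dot u (- v) = - dot u v.
Proof. by rewrite dotC dotNl dotC. Qed.

Lemma nrm2N u : nrm2 (- u) = nrm2 u.
Proof. by rewrite dotNl dotNr opprK. Qed.

Lemma nrm2_ge0 u : 0 <= nrm2 u.
Proof. by rewrite dotE; apply: sumr_ge0 => i _; rewrite -expr2 sqr_ge0. Qed.

Lemma nrm2_eq0 u : nrm2 u = 0 -> u = 0.
Proof.
rewrite dotE => /psumr_eq0P u0; apply/matrixP => i j; rewrite (ord1 j) mxE.
have /eqP := u0 (fun k _ => ltac:(by rewrite -expr2 sqr_ge0)) i isT.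
by rewrite mulf_eq0 orbb => /eqP.
Qed.

Lemma dot_trmx p (M : 'M[R]_(m, p)) u (v : 'cV[R]_p) : dot u (M *m v) = dot (M^T *m u) v.
Proof. by rewrite /dot trmx_mul trmxK mulmxA. Qed.

Lemma dot_scalar_mx c x : dot x (c%:M *m x) = c * nrm2 x.
Proof. by rewrite mul_scalar_mx dotZr. Qed.

Lemma lemxP A B : lemx A B <-> forall x, dot x (A *m x) <= dot x (B *m x).
Proof.
have formE M x : (x^T *m M *m x) 0 0 = dot x (M *m x) by rewrite /dot mulmxA.
by rewrite /lemx /psd; split=> AB x; have := AB x;
  rewrite formE mulmxBl dotDr dotNr subr_ge0.
Qed.

Lemma lemx_scalar_mxP c B : lemx c%:M B <-> forall x, c * nrm2 x <= dot x (B *m x).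
Proof.
split=> [/lemxP cB x | cB]; first by rewrite -dot_scalar_mx.
by apply/lemxP => x; rewrite dot_scalar_mx.
Qed.

Lemma nrm2_mulmx_le p (B : 'M[R]_(p, m)) s :
  lemx (B^T *m B) s%:M -> forall x, nrm2 (B *m x) <= s * nrm2 x.
Proof.
by move=> /lemxP Bs x; have := Bs x; rewrite dot_scalar_mx -mulmxA dot_trmx trmxK.
Qed.

Lemma nrm2_delta i : nrm2 (delta_mx i 0 : 'cV[R]_m) = 1.
Proof.
rewrite dotE (bigD1 i) //= big1 ?addr0 => [|k ki]; first by rewrite !mxE eqxx mulr1.
by rewrite !mxE (negbTE ki) mul0r.
Qed.

Lemma entry_dot p (M : 'M[R]_(m, p)) i j : M i j = dot (delta_mx i 0) (M *m delta_mx j 0).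
Proof. by rewrite /dot trmx_delta mulmxA -rowE -colE !mxE. Qed.

Lemma sqr_entry_le p (M : 'M[R]_(m, p)) i j : M i j ^+ 2 <= nrm2 (M *m delta_mx j 0).
Proof.
rewrite -colE dotE (bigD1 i) //= !mxE -expr2 lerDl.
by apply: sumr_ge0 => k _; rewrite -expr2 sqr_ge0.
Qed.

End Dot.

Section MxNorm.
Variable R : realType.

Lemma normr_entry_le p q (M : 'M[R]_(p, q)) i j : `|M i j| <= `|M|.
Proof.
rewrite [`|M|]mx_normrE.
exact: (le_bigmax _ (fun ij : 'I_p * 'I_q => `|M ij.1 ij.2|) (i, j)).
Qed.

Lemma normr_mx_le p q (M : 'M[R]_(p, q)) c :
  0 <= c -> (forall i j, `|M i j| <= c) -> `|M| <= c.
Proof. by move=> c0 Mc; rewrite [`|M|]mx_normrE; apply: bigmax_le => // -[i j] _. Qed.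

Lemma normr_block_mx_le p q (A : 'M[R]_p) (B : 'M[R]_(p, q)) (C : 'M[R]_(q, p))
    (D : 'M[R]_q) c :
  0 <= c -> `|A| <= c -> `|B| <= c -> `|C| <= c -> `|D| <= c ->
  `|block_mx A B C D| <= c.
Proof.
move=> c0 Ac Bc Cc Dc; apply: normr_mx_le => // i j.
case: (split_ordP i) => {}i ->; case: (split_ordP j) => {}j ->;
  rewrite ?(block_mxEul, block_mxEur, block_mxEdl, block_mxEdr);
  by apply: le_trans (normr_entry_le _ _ _) _.
Qed.

Lemma normr_le_of_nrm2_mulmx p m (B : 'M[R]_(p, m)) s t :
  0 <= t -> s <= t ^+ 2 -> (forall x, nrm2 (B *m x) <= s * nrm2 x) -> `|B| <= t.
Proof.
move=> t0 st Bs; apply: normr_mx_le => // i j.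
rewrite -(@ler_pXn2r _ 2) // ?nnegrE ?normr_ge0 // real_normK ?num_real //.
by apply: le_trans (sqr_entry_le _ _ _) (le_trans (Bs _) _); rewrite nrm2_delta mulr1.
Qed.

End MxNorm.

Section CoerciveInverse.
Variables (R : realType) (m : nat) (S : 'M[R]_m) (l : R).
Hypotheses (l_gt0 : 0 < l) (lS : lemx l%:M S).
Implicit Types (u v x y z : 'cV[R]_m).

Let coercive x : l * nrm2 x <= dot x (S *m x).
Proof. by move/lemx_scalar_mxP: lS; apply. Qed.

Lemma coercive_unitmx : S \in unitmx.
Proof.
rewrite unitmxE unitfE; apply/negP => /det0P [v v_neq0 vS].
have Sv : dot v^T (S *m v^T) = 0 by rewrite /dot trmxK mulmxA vS mul0mx mxE.
have : nrm2 v^T = 0.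
  apply/eqP; rewrite eq_le nrm2_ge0 andbT -(pmulr_rle0 _ l_gt0) -Sv; exact: coercive.
move/nrm2_eq0/(congr1 trmx); rewrite trmxK trmx0 => v0.
by rewrite v0 eqxx in v_neq0.
Qed.

Lemma nrm2_mulmx_ge y : l * dot y (S *m y) <= nrm2 (S *m y).
Proof.
have := nrm2_ge0 (S *m y - l *: y).
rewrite dotDl !dotDr !dotNl !dotNr !dotZl !dotZr (dotC (S *m y) y) opprK.
have : 0 <= l * (dot y (S *m y) - l * nrm2 y).
  by apply: mulr_ge0; [exact: ltW | rewrite subr_ge0 coercive].
nra.
Qed.

Let invmxK z : S *m (invmx S *m z) = z.
Proof. by rewrite mulKVmx // coercive_unitmx. Qed.

Lemma invmx_coercive_ge0 z : 0 <= dot z (invmx S *m z).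
Proof.
set y := invmx S *m z; rewrite -(invmxK z) -/y dotC.
exact: le_trans (mulr_ge0 (ltW l_gt0) (nrm2_ge0 _)) (coercive _).
Qed.

Lemma invmx_coercive_le z : l * dot z (invmx S *m z) <= nrm2 z.
Proof. set y := invmx S *m z; rewrite -(invmxK z) -/y dotC; exact: nrm2_mulmx_ge. Qed.

Lemma nrm2_invmx_coercive z : l ^+ 2 * nrm2 (invmx S *m z) <= nrm2 z.
Proof.
set y := invmx S *m z; rewrite -(invmxK z) -/y.
by apply: le_trans (nrm2_mulmx_ge y); rewrite expr2 -mulrA ler_pM2l.
Qed.

Lemma invmx_coercive_polar (S_sym : S^T = S) u v :
  l * `|dot u (invmx S *m v)| <= nrm2 u + nrm2 v.
Proof.
have Wvu : dot v (invmx S *m u) = dot u (invmx S *m v).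
  by rewrite dot_trmx trmx_inv S_sym dotC.
have formE e : dot (u + e *: v) (invmx S *m (u + e *: v)) =
    dot u (invmx S *m u) + 2 * e * dot u (invmx S *m v) + e ^+ 2 * dot v (invmx S *m v).
  by rewrite mulmxDr -scalemxAr dotDl !dotDr !dotZl !dotZr Wvu; ring.
have nrm2E e : nrm2 (u + e *: v) = nrm2 u + 2 * e * dot u v + e ^+ 2 * nrm2 v.
  by rewrite dotDl !dotDr !dotZl !dotZr (dotC v u); ring.
rewrite -(gtr0_norm l_gt0) -normrM ler_norml.
have := invmx_coercive_le (u + 1 *: v); have := invmx_coercive_le (u + -1 *: v).
have := nrm2_ge0 (u + 1 *: v); have := nrm2_ge0 (u + -1 *: v).
rewrite !formE !nrm2E.
have := mulr_ge0 (ltW l_gt0) (invmx_coercive_ge0 u).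
have := mulr_ge0 (ltW l_gt0) (invmx_coercive_ge0 v).
nra.
Qed.

Lemma normr_mulmx_invmx_coercive (S_sym : S^T = S) p q
    (X : 'M[R]_(p, m)) (Y : 'M[R]_(m, q)) s :
  0 <= s -> (forall x : 'cV_p, nrm2 (X^T *m x) <= s * nrm2 x) ->
  (forall x : 'cV_q, nrm2 (Y *m x) <= s * nrm2 x) ->
  l * `|X *m invmx S *m Y| <= 2 * s.
Proof.
move=> s0 Xs Ys; rewrite mulrC -ler_pdivlMr //.
apply: normr_mx_le => [|i j]; first exact: divr_ge0 (mulr_ge0 (ler0n _ 2) s0) (ltW l_gt0).
rewrite ler_pdivlMr // mulrC entry_dot -!mulmxA dot_trmx.
apply: le_trans (invmx_coercive_polar S_sym _ _) _; rewrite mulr2n mulrDl mul1r.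
by apply: lerD; [apply: le_trans (Xs _) _ | apply: le_trans (Ys _) _];
  rewrite nrm2_delta mulr1.
Qed.

Lemma nrm2_schur_offdiag (B : 'M[R]_m) rho s s' :
  0 < rho -> rho <= l -> 0 <= s -> s ^+ 2 <= rho ^+ 2 * s' ->
  (forall x, nrm2 (B *m x) <= s * nrm2 x) ->
  forall x, nrm2 (B *m (invmx S *m (B *m x))) <= s' * nrm2 x.
Proof.
move=> rho_gt0 rho_le s0 ss' Bs x.
have rho2_le : rho ^+ 2 <= l ^+ 2.
  by apply: lerXn2r => //; rewrite nnegrE; apply: ltW.
rewrite -(ler_pM2l (exprn_gt0 2 rho_gt0)).
apply: le_trans (ler_wpM2r (nrm2_ge0 _) rho2_le) _.
apply: le_trans (ler_wpM2l (sqr_ge0 l) (Bs _)) _.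
rewrite mulrCA; apply: le_trans (ler_wpM2l s0 (nrm2_invmx_coercive _)) _.
apply: le_trans (ler_wpM2l s0 (Bs x)) _.
by rewrite !mulrA -expr2 ler_wpM2r ?nrm2_ge0.
Qed.

End CoerciveInverse.

Section SelfStar.
Variables (R : realType) (n : nat).
Implicit Types P : 'M[R]_(n + n).

Lemma oast_selfE P : oast P P = block_mx
  (ulsubmx P - ursubmx P *m invmx (ulsubmx P + drsubmx P) *m dlsubmx P)
  (- (ursubmx P *m invmx (ulsubmx P + drsubmx P) *m ursubmx P))
  (- (dlsubmx P *m invmx (ulsubmx P + drsubmx P) *m dlsubmx P))
  (drsubmx P - dlsubmx P *m invmx (ulsubmx P + drsubmx P) *m ursubmx P).
Proof.
rewrite /oast [drsubmx P + _]addrC mul_col_mx mul_col_row opp_block_mx.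
by rewrite add_block_mx !add0r.
Qed.

Lemma oast_self_sym P : P^T = P -> (oast P P)^T = oast P P.
Proof.
move=> P_sym.
have W_sym : (invmx (ulsubmx P + drsubmx P))^T = invmx (ulsubmx P + drsubmx P).
  by rewrite trmx_inv linearD /= trmx_ulsub trmx_drsub P_sym.
rewrite oast_selfE tr_block_mx !linearB /= !linearN /= !trmx_mul W_sym.
by rewrite trmx_ulsub trmx_drsub trmx_ursub trmx_dlsub P_sym !mulmxA.
Qed.

End SelfStar.

Definition block_bounds (R : realType) (n : nat) (l s : R) (P : 'M[R]_(n + n)) :=
  [/\ P^T = P, lemx l%:M (ulsubmx P + drsubmx P),
      forall x, nrm2 (ursubmx P *m x) <= s * nrm2 x &
      forall x, nrm2 (dlsubmx P *m x) <= s * nrm2 x].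

Lemma block_bounds_weaken (R : realType) (n : nat) (l l' s s' : R) (P : 'M[R]_(n + n)) :
  l' <= l -> s <= s' -> block_bounds l s P -> block_bounds l' s' P.
Proof.
move=> ll' ss' [P_sym /lemx_scalar_mxP lP Bs Cs]; split=> // [|x|x].
- apply/lemx_scalar_mxP => x; exact: le_trans (ler_wpM2r (nrm2_ge0 _) ll') (lP x).
- exact: le_trans (Bs x) (ler_wpM2r (nrm2_ge0 _) ss').
- exact: le_trans (Cs x) (ler_wpM2r (nrm2_ge0 _) ss').
Qed.

Section Step.
Variables (R : realType) (n : nat) (rho l s : R) (P : 'M[R]_(n + n)).
Hypotheses (rho_gt0 : 0 < rho) (rho_le_l : rho <= l) (s_ge0 : 0 <= s).
Hypothesis bounds : block_bounds l s P.

Let l_gt0 : 0 < l. Proof. exact: lt_le_trans rho_le_l. Qed.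
Let P_sym : P^T = P. Proof. by case: bounds. Qed.
Let lS : lemx l%:M (ulsubmx P + drsubmx P). Proof. by case: bounds. Qed.
Let Bs x : nrm2 (ursubmx P *m x) <= s * nrm2 x. Proof. by case: bounds. Qed.
Let Cs x : nrm2 (dlsubmx P *m x) <= s * nrm2 x. Proof. by case: bounds. Qed.
Let B_tr : (ursubmx P)^T = dlsubmx P. Proof. by rewrite trmx_ursub P_sym. Qed.
Let C_tr : (dlsubmx P)^T = ursubmx P. Proof. by rewrite trmx_dlsub P_sym. Qed.
Let S_sym : (ulsubmx P + drsubmx P)^T = ulsubmx P + drsubmx P.
Proof. by rewrite linearD /= trmx_ulsub trmx_drsub P_sym. Qed.

Local Notation W := (invmx (ulsubmx P + drsubmx P)).

Lemma lemx_oast_diag_sum l' : rho * l' <= rho * l - 2 * s ->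
  lemx l'%:M (ulsubmx (oast P P) + drsubmx (oast P P)).
Proof.
move=> rho_l'; apply/lemx_scalar_mxP => x.
have schur_form (X Y : 'M[R]_n) : X^T = Y ->
    dot x (X *m W *m Y *m x) = dot (Y *m x) (W *m (Y *m x)).
  by move=> <-; rewrite -!mulmxA dot_trmx.
have schur_le (Y : 'M[R]_n) : (forall x, nrm2 (Y *m x) <= s * nrm2 x) ->
    rho * dot (Y *m x) (W *m (Y *m x)) <= s * nrm2 x.
  move=> Ys; apply: le_trans (Ys x).
  apply: le_trans (invmx_coercive_le l_gt0 lS _).
  by rewrite ler_wpM2r ?(invmx_coercive_ge0 l_gt0 lS).
rewrite oast_selfE block_mxKul block_mxKdr addrACA -opprD !mulmxDl mulNmx mulmxDl.
rewrite !dotDr dotNr dotDr (schur_form _ _ B_tr) (schur_form _ _ C_tr).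
rewrite -(ler_pM2l rho_gt0).
have := schur_le _ Bs; have := schur_le _ Cs.
have := ler_wpM2r (nrm2_ge0 x) rho_l'.
have := ler_wpM2l (ltW rho_gt0) ((lemx_scalar_mxP _ _).1 lS x).
rewrite mulmxDl dotDr; lra.
Qed.

Lemma block_bounds_oast l' s' :
  rho * l' <= rho * l - 2 * s -> s ^+ 2 <= rho ^+ 2 * s' ->
  block_bounds l' s' (oast P P).
Proof.
move=> rho_l' ss'; split.
- exact: oast_self_sym.
- exact: lemx_oast_diag_sum.
- move=> x; rewrite oast_selfE block_mxKur mulNmx nrm2N -!mulmxA.
  exact: (nrm2_schur_offdiag l_gt0 lS rho_gt0 rho_le_l s_ge0 ss' Bs).
- move=> x; rewrite oast_selfE block_mxKdl mulNmx nrm2N -!mulmxA.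
  exact: (nrm2_schur_offdiag l_gt0 lS rho_gt0 rho_le_l s_ge0 ss' Cs).
Qed.

Lemma normr_oast_sub t : 0 <= t -> s <= t ^+ 2 -> `|oast P P - P| <= 2 * s / rho + t.
Proof.
move=> t0 st.
have schur (X Y : 'M[R]_n) : (forall x, nrm2 (X^T *m x) <= s * nrm2 x) ->
    (forall x, nrm2 (Y *m x) <= s * nrm2 x) -> `|X *m W *m Y| <= 2 * s / rho.
  move=> Xs Ys; rewrite ler_pdivlMr // mulrC.
  apply: le_trans (ler_wpM2r (normr_ge0 _) rho_le_l) _.
  exact: (normr_mulmx_invmx_coercive l_gt0 lS S_sym s_ge0 Xs Ys).
have sB : `|ursubmx P| <= t := normr_le_of_nrm2_mulmx t0 st Bs.
have sC : `|dlsubmx P| <= t := normr_le_of_nrm2_mulmx t0 st Cs.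
have c0 : 0 <= 2 * s / rho by rewrite divr_ge0 ?mulr_ge0 // ltW.
rewrite -[P in _ - P]submxK oast_selfE opp_block_mx add_block_mx.
apply: normr_block_mx_le; first exact: addr_ge0.
- rewrite addrAC subrr add0r normrN -[leLHS]addr0.
  by apply: lerD => //; apply: schur; rewrite ?B_tr ?C_tr.
- apply: le_trans (ler_normD _ _) _; rewrite !normrN; apply: lerD => //.
  by apply: schur; rewrite ?B_tr ?C_tr.
- apply: le_trans (ler_normD _ _) _; rewrite !normrN; apply: lerD => //.
  by apply: schur; rewrite ?B_tr ?C_tr.
- rewrite addrAC subrr add0r normrN -[leLHS]addr0.
  by apply: lerD => //; apply: schur; rewrite ?B_tr ?C_tr.
Qed.

End Step.

Lemma omseq_block_bounds (R : realType) (n : nat) (rho q : R) (P : 'M[R]_(n + n)) :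
  0 < rho -> 0 < q -> q < 1 ->
  block_bounds (rho * (1 + 2 * q / (1 - q))) (rho ^+ 2 * q) P ->
  forall k, block_bounds rho (rho ^+ 2 * q ^+ k.+1) (omseq P k).
Proof.
move=> rho_gt0 q_gt0 q_lt1 bounds0.
have q1_neq0 : 1 - q != 0 by rewrite subr_eq0 gt_eqF.
have rho_le k : rho <= rho * (1 + 2 * q ^+ k / (1 - q)).
  apply: ler_peMr; first exact: ltW.
  rewrite lerDl; apply: divr_ge0; last by rewrite subr_ge0 ltW.
  by rewrite mulr_ge0 // exprn_ge0 // ltW.
suff bounds k : block_bounds (rho * (1 + 2 * q ^+ k.+1 / (1 - q)))
    (rho ^+ 2 * q ^+ k.+1) (omseq P k).
  by move=> k; apply: block_bounds_weaken (bounds k).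
elim: k => [|k IH]; first by rewrite expr1.
apply: (block_bounds_oast rho_gt0 (rho_le _) _ IH).
- by rewrite mulr_ge0 ?sqr_ge0 // exprn_ge0 // ltW.
- by rewrite le_eqVlt; apply/orP; left; apply/eqP; rewrite exprS; field.
- rewrite exprMn [_ ^+ 2 ^+ 2]expr2 -mulrA !ler_wpM2l ?sqr_ge0 //.
  have qk_ge0 : 0 <= q ^+ k.+1 by rewrite exprn_ge0 // ltW.
  rewrite expr2 [q ^+ k.+2]exprS ler_wpM2r // exprS.
  by rewrite ger_pMr //; apply: exprn_ile1; apply: ltW.
Qed.

(* Joins the completeness and the normed-module structures of matrices, which
   the library declares separately. *)
HB.instance Definition _ (R : realType) (p q : nat) := Complete.on 'M[R]_(p, q).

Lemma cvg_geometric_increments (R : realType) (V : completeNormedModType R)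
    (u : nat -> V) (c r : R) :
  0 <= r -> r < 1 -> (forall k, `|u k.+1 - u k| <= c * r ^+ k) -> cvgn u.
Proof.
move=> r_ge0 r_lt1 du.
have c_ge0 : 0 <= c by have := le_trans (normr_ge0 _) (du 0%N); rewrite expr0 mulr1.
have -> : u = (fun k => u 0%N + series (telescope u) k).
  by apply/funext => k; exact: eq_sum_telescope.
apply: is_cvgD; first exact: is_cvg_cst.
apply: normed_cvg; apply: (@series_le_cvg _ _ (geometric c r)) => [k|k|k|] /=.
- exact: normr_ge0.
- by rewrite mulr_ge0 ?exprn_ge0.
- exact: du.
- by apply: is_cvg_geometric_series; rewrite ger0_norm.
Qed.

Lemma cvg_mx_entry (R : realType) p q (u : nat -> 'M[R]_(p, q)) (L : 'M[R]_(p, q)) :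
  u @ \oo --> L -> forall i j, (fun k => u k i j) @ \oo --> L i j.
Proof.
move=> uL i j.
exact: (@continuous_cvg _ _ _ _ _ u (fun M : 'M[R]_(p, q) => M i j) L
  (@coord_continuous R _ _ i j L) uL).
Qed.
Arguments cvg_mx_entry {R p q u L} uL i j.

Lemma lim_entry_eq0 (R : realType) p q (u : nat -> 'M[R]_(p, q)) (L : 'M[R]_(p, q))
    (t : nat -> R) i j :
  u @ \oo --> L -> t @ \oo --> 0 -> (forall k, `|u k i j| <= t k) -> L i j = 0.
Proof.
move=> uL t0 ut.
have entry0 : (fun k => u k i j) @ \oo --> 0.
  apply: (@squeeze_cvgr _ _ _ _ (fun k => - t k) t) => //.
  - by apply: nearW => k; rewrite -ler_norml.
  - by rewrite -oppr0; apply: cvgN.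
exact: (cvg_unique (@Rhausdorff R) (cvg_mx_entry uL i j) entry0).
Qed.

Lemma lim_block_diag (R : realType) n (u : nat -> 'M[R]_(n + n)) (L : 'M[R]_(n + n))
    (t : nat -> R) :
  u @ \oo --> L -> t @ \oo --> 0 ->
  (forall k, `|ursubmx (u k)| <= t k) -> (forall k, `|dlsubmx (u k)| <= t k) ->
  L = block_mx (ulsubmx L) 0 0 (drsubmx L).
Proof.
move=> uL t0 Bt Ct; rewrite -[LHS]submxK; congr block_mx; apply/matrixP => i j.
- rewrite !mxE; apply: (lim_entry_eq0 uL t0) => k.
  by have := normr_entry_le (ursubmx (u k)) i j; rewrite !mxE => /le_trans; apply.
- rewrite !mxE; apply: (lim_entry_eq0 uL t0) => k.
  by have := normr_entry_le (dlsubmx (u k)) i j; rewrite !mxE => /le_trans; apply.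
Qed.

Lemma cvg_dot_mulmx (R : realType) m (u : nat -> 'M[R]_m) (L : 'M[R]_m) (x : 'cV[R]_m) :
  (forall i j, (fun k => u k i j) @ \oo --> L i j) ->
  (fun k => dot x (u k *m x)) @ \oo --> dot x (L *m x).
Proof.
move=> uL.
have formE M : dot x (M *m x) = \sum_i \sum_j x i 0 * M i j * x j 0.
  rewrite dotE; apply: eq_bigr => i _; rewrite mxE mulr_sumr.
  by apply: eq_bigr => j _; rewrite mulrA.
rewrite formE; under eq_cvg do rewrite formE.
apply: cvg_big => [|i _]; first exact: add_continuous.
apply: cvg_big => [|j _]; first exact: add_continuous.
by apply: cvgMl; apply: cvgMr.
Qed.

Lemma lemx_lim (R : realType) m (A : 'M[R]_m) (u : nat -> 'M[R]_m) (L : 'M[R]_m) :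
  (forall i j, (fun k => u k i j) @ \oo --> L i j) ->
  (forall k, lemx A (u k)) -> lemx A L.
Proof.
move=> uL Au; apply/lemxP => x; rewrite -subr_ge0.
pose f k := dot x (u k *m x) - dot x (A *m x).
have f_ge0 : \forall k \near \oo, [set y : R | 0 <= y] (f k).
  by apply: nearW => k; rewrite /= subr_ge0; exact: (lemxP _ _).1 (Au k) x.
have f_cvg : f @ \oo --> dot x (L *m x) - dot x (A *m x).
  by apply: cvgB; [exact: cvg_dot_mulmx | exact: cvg_cst].
exact: (@closed_cvg _ _ _ _ f _ (@closed_ge R 0) f_ge0 _ f_cvg).
Qed.

Section Convergence.
Variables (R : realType) (n : nat) (rho q : R) (P : 'M[R]_(n + n)).
Hypotheses (rho_gt0 : 0 < rho) (q_gt0 : 0 < q) (q_lt1 : q < 1).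
Hypothesis bounds : forall k, block_bounds rho (rho ^+ 2 * q ^+ k.+1) (omseq P k).

Let r := Num.sqrt q.
Let r_ge0 : 0 <= r. Proof. exact: sqrtr_ge0. Qed.
Let r_sqr : r ^+ 2 = q. Proof. by rewrite sqr_sqrtr // ltW. Qed.
Let r_lt1 : r < 1. Proof. by rewrite -(sqrtr1 R) ltr_sqrt. Qed.

Let t k := rho * r ^+ k.+1.
Let t_ge0 k : 0 <= t k. Proof. by rewrite mulr_ge0 ?exprn_ge0 // ltW. Qed.
Let s_le_t k : rho ^+ 2 * q ^+ k.+1 <= t k ^+ 2.
Proof. by rewrite exprMn -r_sqr -!exprM mulnC. Qed.

Lemma omseq_increment k : `|omseq P k.+1 - omseq P k| <= 3 * rho * r * r ^+ k.
Proof.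
have s_ge0 : 0 <= rho ^+ 2 * q ^+ k.+1 by rewrite mulr_ge0 ?sqr_ge0 // exprn_ge0 // ltW.
have := normr_oast_sub rho_gt0 (lexx rho) s_ge0 (bounds k) (t_ge0 k) (s_le_t k).
move=> /le_trans; apply.
rewrite /t -[3 * rho * r * _]mulrA -exprS -r_sqr -exprM mulnC exprM.
have : 0 <= r ^+ k.+1 <= 1 by rewrite exprn_ge0 // exprn_ile1 // ltW.
move: (r ^+ k.+1) => a /andP[a_ge0 a_le1].
have -> : 2 * (rho ^+ 2 * a ^+ 2) / rho = 2 * rho * a ^+ 2 by field; rewrite gt_eqF.
have : 0 <= rho * a * (1 - a) by rewrite !mulr_ge0 ?subr_ge0 // ltW.
lra.
Qed.

Lemma omseq_lim_block_diag :
  exists A B : 'M[R]_n, lemx rho%:M (A + B) /\ omseq P @ \oo --> block_mx A 0 0 B.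
Proof.
have uL : omseq P @ \oo --> limn (omseq P).
  exact: (cvg_geometric_increments r_ge0 r_lt1 omseq_increment).
set L := limn (omseq P) in uL *.
have t0 : t @ \oo --> 0.
  have -> : t = geometric (rho * r) r by apply/funext => k; rewrite /t /= exprS mulrA.
  by apply: cvg_geometric; rewrite ger0_norm.
have offdiag k : `|ursubmx (omseq P k)| <= t k /\ `|dlsubmx (omseq P k)| <= t k.
  by have [_ _ Bs Cs] := bounds k; split; apply: normr_le_of_nrm2_mulmx (s_le_t k) _.
exists (ulsubmx L), (drsubmx L); split.
- apply: (@lemx_lim _ _ _ (fun k => ulsubmx (omseq P k) + drsubmx (omseq P k))).
    move=> i j; rewrite !mxE; under eq_cvg do rewrite !mxE.
    by apply: cvgD; apply: cvg_mx_entry.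
  by move=> k; have [] := bounds k.
- rewrite -(lim_block_diag uL t0 (fun k => (offdiag k).1) (fun k => (offdiag k).2)).
  exact: uL.
Qed.

End Convergence.

Theorem theorem4p2 (R : realType) (n : nat) (sigma lambda rho : R)
  (Omega : 'M[R]_(n + n)) :
  0 < sigma -> 0 < lambda -> 0 < rho ->
  rho ^-2 * sigma < 1 ->
  rho <= lambda - 2 * rho^-1 * sigma * (1 - rho ^-2 * sigma)^-1 ->
  Omega^T = Omega ->
  pd (ulsubmx Omega + drsubmx Omega) ->
  lemx (ursubmx Omega *m dlsubmx Omega) (sigma%:M) ->
  lemx (dlsubmx Omega *m ursubmx Omega) (sigma%:M) ->
  lemx (lambda%:M) (ulsubmx Omega + drsubmx Omega) ->
  (forall k : nat,
     lemx (rho%:M) (ulsubmx (omseq Omega k) + drsubmx (omseq Omega k)))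
  /\
  (exists (A B : 'M[R]_n),
     lemx (rho%:M) (A + B) /\
     omseq Omega @ \oo --> block_mx A 0 0 B).
Proof.
(* [0 < lambda] and the definiteness of Ω¹¹ + Ω²² follow from the λ bound. *)
move=> sigma_gt0 _ rho_gt0 q_lt1 rho_le Omega_sym _ BC CB lambda_le.
set q := rho ^-2 * sigma in q_lt1 rho_le.
have q_gt0 : 0 < q by rewrite mulr_gt0 // invr_gt0 exprn_gt0.
have rho_neq0 : rho != 0 by rewrite gt_eqF.
have q1_neq0 : 1 - q != 0 by rewrite subr_eq0 gt_eqF.
have sigmaE : sigma = rho ^+ 2 * q by rewrite /q; field.
clearbody q.
have Omega_bounds : block_bounds lambda sigma Omega.
  split=> //; apply: nrm2_mulmx_le; by rewrite ?trmx_ursub ?trmx_dlsub Omega_sym.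
have l0_le : rho * (1 + 2 * q / (1 - q)) <= lambda.
  suff -> : rho * (1 + 2 * q / (1 - q)) = rho + 2 * rho^-1 * sigma * (1 - q)^-1.
    by rewrite -lerBrDr.
  by rewrite sigmaE; field; apply/andP.
have bounds0 : block_bounds (rho * (1 + 2 * q / (1 - q))) (rho ^+ 2 * q) Omega.
  by apply: (block_bounds_weaken l0_le _ Omega_bounds); rewrite -sigmaE.
have bounds := omseq_block_bounds rho_gt0 q_gt0 q_lt1 bounds0.
split=> [k|]; first by case: (bounds k).
exact: omseq_lim_block_diag rho_gt0 q_gt0 q_lt1 bounds.
Qed.
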